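(* Let $d\ge 3$ and let $U$ be the $d\times d$ cyclic shift (circulant) matrix, i.e. $U_{i,j}=1$ if $j\equiv i+1 \pmod d$ and $U_{i,j}=0$ otherwise, with indices $i,j\in\{1,\dots,d\}$. For $k>0$ let $$S(k)=\big((k-1)I+(k+1)U\big)\big((k+1)I+(k-1)U\big)^{-1}.$$ Then: (a) If $d$ is even, $\lim_{k\to\infty}S_{i,j}(k)=\delta_{i,j}-\frac{2}{d}(-1)^{i+j}$ for all $i,j$. (b) If $d$ is odd, $\lim_{k\to\infty}S(k)=I$. In both cases the limiting matrix is symmetric.
   Context: $S(k)$ is the vertex scattering matrix of the ''preferred orientation'' vertex condition $(U-I)\Psi(v)+i(U+I)\Psi'(v)=0$ at a vertex of degree $d$. The edges at the vertex are labelled $1,\dots,d$. *)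

From HB Require Import structures.
From mathcomp Require Import all_boot all_order all_algebra.
From mathcomp Require Import all_classical all_reals all_analysis.
Set Implicit Arguments. Unset Strict Implicit. Unset Printing Implicit Defensive.
Import Order.TTheory GRing.Theory Num.Theory.
Local Open Scope ring_scope.

(* Cyclic shift matrix, 0-based indices: U i j = 1 iff j = i+1 mod d. *)
Definition shiftU (R : pzRingType) (d : nat) : 'M[R]_d :=
  \matrix_(i < d, j < d) ((nat_of_ord j == (i.+1 %% d)%N)%:R).

Definition Smat (R : realType) (d : nat) (k : R) : 'M[R]_d :=
  ((k - 1)%:M + (k + 1) *: shiftU R d) *m invmx ((k + 1)%:M + (k - 1) *: shiftU R d).

From HB Require Import structures.
From mathcomp Require Import all_boot all_order all_algebra.
From mathcomp Require Import all_classical all_reals all_analysis.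
From mathcomp Require Import ring lra.
Import Order.TTheory GRing.Theory Num.Theory.
Import numFieldNormedType.Exports.

(** Since [U ^+ d = 1], the matrix [a + b U] is inverted by a truncated
    geometric series: [(a + b U) (\sum_m a^(d-1-m) (-b)^m U^m) = a^d - (-b)^d].
    With [a = k + 1] and [b = k - 1] this gives [S(k) = 1 + 2 (U - 1) (a + b U)^-1]
    entrywise as a rational function of [t = 1/k], whose limit at [t = 0] is read
    off from the lowest-order terms.  For odd [d] the denominator [(1+t)^d - (t-1)^d]
    does not vanish at [0] and the correction term carries a factor [t]; for even
    [d] both vanish to first order, and the alternating sum of the entries of
    [U^(m+1) - U^m] produces [-2 (-1)^(i+j)]. *)

(* [d - i %% d] stands for [-i] modulo [d] without truncated subtraction. *)
Lemma eqn_modD_shift (d i j m : nat) : 0 < d -> j < d -> m < d ->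
  (j == (i + m) %% d) = (m == (j + (d - i %% d)) %% d).
Proof.
move=> d_gt0 jd md; have id : i %% d < d by rewrite ltn_pmod.
have -> : (j == (i + m) %% d) = (j + (d - i %% d) == i + m + (d - i %% d) %[mod d]).
  by rewrite eqn_modDr (modn_small jd).
by rewrite {2}(divn_eq i d) -!addnA modnMDl addnCA (subnKC (ltnW id)) modnDr
  (modn_small md) eq_sym.
Qed.

Local Open Scope classical_set_scope.
Local Open Scope ring_scope.

Section ShiftPowers.
Variables (R : pzRingType) (n : nat).
Local Notation U := (shiftU R n.+1).

Lemma shiftU_expE (m : nat) (i j : 'I_n.+1) :
  (U ^+ m) i j = (nat_of_ord j == (i + m) %% n.+1)%N%:R.
Proof.
elim: m j => [|m IH] j; first by rewrite expr0 !mxE addn0 modn_small // eq_sym.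
rewrite exprSr -mulmxE mxE.
pose l0 : 'I_n.+1 := Ordinal (ltn_pmod (i + m) (ltn0Sn n)).
rewrite (bigD1 l0) //= big1 ?addr0 => [|l /negbTE nl].
  rewrite IH eqxx mul1r !mxE /=.
  suff -> : (((i + m) %% n.+1).+1 %% n.+1 = (i + m.+1) %% n.+1)%N by [].
  by rewrite -addn1 modnDml addn1 addnS.
rewrite IH; suff /negbTE -> : (nat_of_ord l != (i + m) %% n.+1)%N by rewrite mul0r.
by apply: contraFN nl => /eqP h; apply/eqP/val_inj.
Qed.

Lemma shiftU_exp_order : U ^+ n.+1 = 1.
Proof. by apply/matrixP => i j; rewrite shiftU_expE !mxE modnDr modn_small // eq_sym. Qed.

End ShiftPowers.

Lemma sum_sign_shift (R : pzRingType) (d i : nat) (j : 'I_d) : ~~ odd d ->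
  \sum_(m < d) (-1) ^+ m * (nat_of_ord j == (i + m) %% d)%N%:R = (-1) ^+ (i + j) :> R.
Proof.
move=> ev; have d_gt0 : (0 < d)%N by case: d j ev => [[]|].
have m0d : ((j + (d - i %% d)) %% d < d)%N by rewrite ltn_pmod.
rewrite (bigD1 (Ordinal m0d)) //= big1 ?addr0 => [|m hm]; last first.
  rewrite eqn_modD_shift //; suff /negbTE -> : (nat_of_ord m != Ordinal m0d)%N
    by rewrite mulr0.
  by apply: contra hm => /eqP h; apply/eqP/val_inj.
rewrite eqn_modD_shift // eqxx mulr1 -signr_odd -[RHS]signr_odd /=.
rewrite (odd_mod _ (negbTE ev)) oddD oddB ?(ltnW (ltn_pmod i d_gt0)) //.
by rewrite (negbTE ev) (odd_mod _ (negbTE ev)) oddD; case: (odd i); case: (odd j).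
Qed.

Lemma mul_geom_sum_unity (R : comNzRingType) (A : algType R) (u : A) (n : nat)
    (a b : R) : u ^+ n.+1 = 1 ->
  (a%:A + b *: u) * (\sum_(m < n.+1) (a ^+ (n - m) * (- b) ^+ m) *: u ^+ m)
  = (a ^+ n.+1 - (- b) ^+ n.+1)%:A.
Proof.
move=> un1; have cau : GRing.comm (a%:A) ((- b) *: u).
  by rewrite /GRing.comm -scalerAl mul1r -scalerAr mulr1.
have := subrXX_comm n.+1 cau; rewrite !exprZn un1 expr1n -scalerBl => ->.
rewrite scaleNr opprK; congr (_ * _); apply: eq_bigr => m _.
by rewrite -scaleNr exprZn expr1n exprZn -scalerAl mul1r scalerA.
Qed.

Lemma cvg_horner_invr (R : realType) (p q : {poly R}) : q.[0] != 0 ->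
  p.[k^-1] / q.[k^-1] @[k --> +oo] --> p.[0] / q.[0].
Proof.
have inv0 : (k : R)^-1 @[k --> +oo] --> 0.
  by apply/(gtr0_cvgV0 (f := id)); [exists 0; split => // x | exact: cvg_id].
have hornerV (r : {poly R}) : r.[k^-1] @[k --> +oo] --> r.[0].
  by apply: (cvg_comp (fun k : R => k^-1) (horner r) inv0); exact: continuous_horner.
by move=> q0; apply: cvgM; [|apply: cvgV].
Qed.

Section ScatteringMatrix.
Variables (R : realType) (n : nat).
Local Notation d := n.+1.
Local Notation U := (shiftU R n.+1).

Lemma Smat_geomE (k : R) : (k + 1) ^+ d != (- (k - 1)) ^+ d ->
  Smat d k = 1%:M + (2 / ((k + 1) ^+ d - (- (k - 1)) ^+ d)) *:
    \sum_(m < d) ((k + 1) ^+ (n - m) * (- (k - 1)) ^+ m) *: (U ^+ m.+1 - U ^+ m).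
Proof.
set D := (k + 1) ^+ d - (- (k - 1)) ^+ d; rewrite -subr_eq0 -/D => D0.
pose P := \sum_(m < d) ((k + 1) ^+ (n - m) * (- (k - 1)) ^+ m) *: U ^+ m.
pose A := (k + 1)%:M + (k - 1) *: U.
have AP : A *m P = D%:M.
  have scalarA (c : R) : c%:A = c%:M :> 'M[R]_d by rewrite -scalemx1.
  have := @mul_geom_sum_unity _ _ U n (k + 1) (k - 1) (shiftU_exp_order R n).
  by rewrite !scalarA mulmxE.
have invA : invmx A = D^-1 *: P.
  have AP1 : A *m (D^-1 *: P) = 1%:M.
    by rewrite -scalemxAr AP -scalemx1 scalerA mulVf // scale1r.
  have [Au _] := mulmx1_unit AP1.
  by rewrite -[RHS]mul1mx -(mulVmx Au) -mulmxA AP1 mulmx1.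
have numA : (k - 1)%:M + (k + 1) *: U = A + 2 *: (U - 1%:M).
  rewrite /A scalerBr scalemx1; apply/matrixP => i j; rewrite !mxE.
  by case: (i == j); rewrite ?mulr1n ?mulr0n; ring.
rewrite /Smat -/A numA invA mulmxDl -!scalemxAr AP -scalemx1 scalerA mulVf // scale1r.
rewrite -scalemxAl scalerA mulrC /P mulmx_sumr; congr (_ + _ *: _).
by apply: eq_bigr => m _; rewrite -scalemxAr mulmxBl mul1mx mulmxE -exprS.
Qed.

Definition scat_num (i j : 'I_d) : {poly R} :=
  \sum_(m < d) ((1 + 'X) ^+ (n - m) * ('X - 1) ^+ m) *
    ((U ^+ m.+1) i j - (U ^+ m) i j)%:P.

Definition scat_den : {poly R} := (1 + 'X) ^+ d - ('X - 1) ^+ d.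

Definition scat_den_half : {poly R} :=
  \sum_(l < d) (1 + 'X) ^+ (n - l) * (1 - 'X) ^+ l.

Lemma Smat_horner (k : R) (i j : 'I_d) : 1 < k ->
  Smat d k i j = (i == j)%:R + (2%:P * 'X * scat_num i j).[k^-1] / scat_den.[k^-1].
Proof.
move=> k_gt1; have k0 : k != 0 by rewrite gt_eqF //; lra.
have kp1 : k * (1 + k^-1) = k + 1 by rewrite mulrDr mulr1 mulfV.
have km1 : k * (k^-1 - 1) = - (k - 1) by rewrite mulrBr mulfV // mulr1 opprB.
have denE : (k + 1) ^+ d - (- (k - 1)) ^+ d = k ^+ d * scat_den.[k^-1].
  by rewrite /scat_den !hornerE -kp1 -km1 !exprMn mulrBr.
have numE : \sum_(m < d) ((k + 1) ^+ (n - m) * (- (k - 1)) ^+ m) *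
    ((U ^+ m.+1) i j - (U ^+ m) i j) = k ^+ n * (scat_num i j).[k^-1].
  rewrite /scat_num horner_sum mulr_sumr; apply: eq_bigr => m _.
  rewrite !hornerE -kp1 -km1 !exprMn mulrA; congr (_ * _).
  have mn : (m <= n)%N by rewrite -ltnS ltn_ord.
  have -> : k ^+ n = k ^+ (n - m) * k ^+ m by rewrite -exprD subnK.
  by rewrite /=; ring.
have den_gt0 : 0 < (k + 1) ^+ d - (- (k - 1)) ^+ d.
  rewrite subr_gt0 (le_lt_trans (ler_norm _)) // normrX normrN ger0_norm; last lra.
  by rewrite ltrXn2r //; lra.
have den0 : scat_den.[k^-1] != 0.
  by apply: contraTneq den_gt0 => h; rewrite denE h mulr0 ltxx.
rewrite Smat_geomE; last by rewrite -subr_eq0 gt_eqF.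
rewrite !mxE summxE (eq_bigr (fun m : 'I_d => ((k + 1) ^+ (n - m) * (- (k - 1)) ^+ m) *
  ((U ^+ m.+1) i j - (U ^+ m) i j))) => [|m _]; last by rewrite !mxE.
have -> : (2%:P * 'X * scat_num i j).[k^-1] = 2 * k^-1 * (scat_num i j).[k^-1].
  by rewrite !hornerE.
rewrite numE denE exprS; congr (_ + _); field.
by rewrite den0 k0 expf_neq0.
Qed.

Lemma scat_den_even : ~~ odd d -> scat_den = 2%:P * 'X * scat_den_half.
Proof.
move=> ev; rewrite /scat_den -[('X - 1)]opprB exprNn -signr_odd (negbTE ev).
by rewrite expr0 mul1r subrXX; congr (_ * _); ring.
Qed.

Lemma scat_num0 (i j : 'I_d) : ~~ odd d ->
  (scat_num i j).[0] = - 2 * (-1) ^+ (i + j)%N.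
Proof.
move=> ev; rewrite /scat_num horner_sum.
under eq_bigr do rewrite !hornerE expr1n mul1r !shiftU_expE mulrBr -addSnnS.
by rewrite sumrB !sum_sign_shift // addSn exprS; ring.
Qed.

Lemma scat_den0 : odd d -> scat_den.[0] = 2.
Proof. by move=> od; rewrite /scat_den !hornerE expr1n -signr_odd od; ring. Qed.

Lemma scat_den_half0 : scat_den_half.[0] = d%:R.
Proof.
rewrite /scat_den_half horner_sum (eq_bigr (fun _ => 1)) ?sumr_const ?card_ord //.
by move=> l _; rewrite !hornerE ?addr0 ?subr0 !expr1n mulr1.
Qed.

Lemma Smat_cvg_odd (i j : 'I_d) : odd d ->
  Smat d k i j @[k --> +oo] --> (1%:M : 'M[R]_d) i j.
Proof.
move=> od; have Smat_near : \forall k \near +oo,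
    (i == j)%:R + (2%:P * 'X * scat_num i j).[k^-1] / scat_den.[k^-1] = Smat d k i j.
  by exists 1; split; [rewrite num_real | move=> k /Smat_horner ->].
apply: cvg_trans (near_eq_cvg Smat_near) _.
have -> : (1%:M : 'M[R]_d) i j
    = (i == j)%:R + (2%:P * 'X * scat_num i j).[0] / scat_den.[0].
  by rewrite mxE !hornerE ?mulr0 ?mul0r ?addr0.
apply: cvgD; first exact: cvg_cst.
by apply: cvg_horner_invr; rewrite scat_den0 // pnatr_eq0.
Qed.

Lemma Smat_cvg_even (i j : 'I_d) : ~~ odd d ->
  Smat d k i j @[k --> +oo] --> ((i == j)%:R - 2 / d%:R * (-1) ^+ (i + j)%N : R).
Proof.
move=> ev; have Smat_near : \forall k \near +oo,
    (i == j)%:R + (scat_num i j).[k^-1] / scat_den_half.[k^-1] = Smat d k i j.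
  exists 1; split; first by rewrite num_real.
  move=> k k_gt1; rewrite Smat_horner // scat_den_even // !(hornerM (2%:P * 'X)).
  have t0 : (2%:P * 'X : {poly R}).[k^-1] != 0.
    by rewrite !hornerE mulf_neq0 ?pnatr_eq0 ?invr_eq0 // gt_eqF //; lra.
  by rewrite invfM mulrACA mulfV // mul1r.
apply: cvg_trans (near_eq_cvg Smat_near) _.
have -> : 2 / d%:R * (-1) ^+ (i + j)%N = - ((scat_num i j).[0] / scat_den_half.[0]).
  by rewrite scat_den_half0 scat_num0 //; ring.
rewrite opprK; apply: cvgD; first exact: cvg_cst.
by apply: cvg_horner_invr; rewrite scat_den_half0 pnatr_eq0.
Qed.

End ScatteringMatrix.

Theorem mainTheorem2 (R : realType) (d : nat) (hd : (3 <= d)%N) :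
  (~~ odd d -> forall i j : 'I_d,
      Smat d k i j @[k --> +oo]
        --> ((i == j)%:R - 2 / d%:R * (-1) ^+ (i + j)%N : R)) /\
  (odd d -> forall i j : 'I_d,
      Smat d k i j @[k --> +oo] --> (1%:M : 'M[R]_d) i j) /\
  (forall L : 'M[R]_d,
      (forall i j : 'I_d, Smat d k i j @[k --> +oo] --> L i j) -> L^T = L).
Proof.
case: d hd => [//|n] _.
split=> [ev i j|]; first exact: Smat_cvg_even.
split=> [od i j|]; first exact: Smat_cvg_odd.
move=> L SL; apply/matrixP => i j; rewrite mxE.
have L_eq (a b : 'I_n.+1) l : Smat n.+1 k a b @[k --> +oo] --> l -> L a b = l.
  exact: cvg_unique (SL a b).
have [od|ev] := boolP (odd n.+1).
  by rewrite (L_eq _ _ _ (Smat_cvg_odd _ _ j i od)) (L_eq _ _ _ (Smat_cvg_odd _ _ i j od))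
    !mxE eq_sym.
by rewrite (L_eq _ _ _ (Smat_cvg_even _ _ j i ev)) (L_eq _ _ _ (Smat_cvg_even _ _ i j ev))
  eq_sym addnC.
Qed.
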